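(* Consider $f:\mathbb R^n\to\mathbb R$ convex and continuously differentiable, $A\in\mathbb R^{m\times n}$, $b\in\mathbb R^m$, with nonempty KKT set $\Omega$. Let $\{(x_k,\lambda_k)\}_{k\ge0}$ be generated by the algorithm described in the context, write $z_k=(x_k,\lambda_k)$, and fix $z^*=(x^*,\lambda^* )\in\Omega$. Define $H_k=\mathcal L_\beta(x_k,\lambda^* )-\mathcal L_\beta(x^*,\lambda^* )$, $w_k=\eta(z_k-z^* )+(t_k-1)(z_k-z_{k-1})$, $B_k=\frac12\|w_k\|_M^2+\frac{\eta(1-\eta)}2\|z_k-z^*\|_M^2$ and $\mathcal E_k=t_k^2H_k+B_k$ for $k\ge1$. Then, for both Case I and Case II and every $k\ge1$, $\mathcal E_{k+1}-\mathcal E_k\le(\rho-\eta)t_{k+1}H_k-(1-\eta)(t_{k+1}-\tfrac12)\|z_{k+1}-z_k\|_M^2$.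
   Context: The KKT set is $\Omega=\{(x^*,\lambda^* ): Ax^*=b,\ \nabla f(x^* )+A^\top\lambda^*=0\}$. $\mathcal L_\beta(x,\lambda)=f(x)+\langle\lambda,Ax-b\rangle+\frac\beta2\|Ax-b\|^2$. For $z=(x,\lambda)$, $\|z\|_M^2=\frac1\gamma\|x\|^2+\frac1\delta\|\lambda\|^2$. Parameter sequence: $\{t_k\}_{k\ge1}$ is nondecreasing, $t_1=1$, $t_k>1$ for all $k>2$, $t_k\to+\infty$, and $t_{k+1}^2-t_k^2\le\rho t_{k+1}$ for all $k\ge 1$, with fixed $\rho\in(0,1]$. Fix $\eta\in[\rho,1]$, $\gamma>0$, $\delta>0$, $\beta\ge0$. Algorithm: initial points $x_0=x_1\in\mathbb R^n$, $\lambda_0=\lambda_1\in\mathbb R^m$. For $k=1,2,\dots$: set $\alpha_k=(t_{k+1}-\eta)/\eta$, $c_k=t_{k+1}/\eta$, $\bar x_k=x_k+\frac{t_k-1}{t_{k+1}}(x_k-x_{k-1})$, $\bar\lambda_k=\lambda_k+\frac{t_k-1}{t_{k+1}}(\lambda_k-\lambda_{k-1})$, $p_k=c_k\bar\lambda_k-\alpha_k\lambda_k$, $r_k=\alpha_kAx_k+b$. Case I ($f$ convex and $C^1$): $x_{k+1}=\arg\min_{x}\{f(x)+\frac\beta2\|Ax-b\|^2+\frac1{2\gamma}\|x-\bar x_k\|^2+\langle p_k,Ax-b\rangle+\frac\delta2\|c_kAx-r_k\|^2\}$. Case II ($f$ convex with $L$-Lipschitz gradient, and $\gamma\le 1/L$):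 $x_{k+1}=\arg\min_{x}\{\langle\nabla f(\bar x_k),x\rangle+\frac\beta2\|Ax-b\|^2+\frac1{2\gamma}\|x-\bar x_k\|^2+\langle p_k,Ax-b\rangle+\frac\delta2\|c_kAx-r_k\|^2\}$. Then $\lambda_{k+1}=\bar\lambda_k+\delta(c_kAx_{k+1}-r_k)$. *)

From mathcomp Require Import all_boot all_algebra reals.
Set Implicit Arguments. Unset Strict Implicit. Unset Printing Implicit Defensive.
Import GRing.Theory Num.Theory.
Local Open Scope ring_scope.

Section Defs.
Variable R : realType.

Definition dot n (u v : 'cV[R]_n) : R := \sum_(i < n) u i 0 * v i 0.
Definition nsq n (u : 'cV[R]_n) : R := dot u u.
Definition enorm n (u : 'cV[R]_n) : R := Num.sqrt (nsq u).

Definition convex_fun n (f : 'cV[R]_n -> R) : Prop :=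
  forall (x y : 'cV[R]_n) (s : R), 0 <= s -> s <= 1 ->
    f ((1 - s) *: x + s *: y) <= (1 - s) * f x + s * f y.

Definition is_gradient n (f : 'cV[R]_n -> R) (g : 'cV[R]_n -> 'cV[R]_n) : Prop :=
  forall x : 'cV[R]_n, forall eps : R, 0 < eps -> exists2 d : R, 0 < d &
    forall h : 'cV[R]_n, enorm h < d ->
      `| f (x + h) - f x - dot (g x) h | <= eps * enorm h.

Definition continuous_map n k (g : 'cV[R]_n -> 'cV[R]_k) : Prop :=
  forall x : 'cV[R]_n, forall eps : R, 0 < eps -> exists2 d : R, 0 < d &
    forall y : 'cV[R]_n, enorm (y - x) < d -> enorm (g y - g x) < eps.

Definition lipschitz_map n (g : 'cV[R]_n -> 'cV[R]_n) (L : R) : Prop :=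
  forall x y : 'cV[R]_n, enorm (g x - g y) <= L * enorm (x - y).

Definition is_argmin n (Phi : 'cV[R]_n -> R) (x : 'cV[R]_n) : Prop :=
  forall y : 'cV[R]_n, Phi x <= Phi y.

Definition KKT m n (g : 'cV[R]_n -> 'cV[R]_n) (A : 'M[R]_(m, n)) (b : 'cV[R]_m)
  (xs : 'cV[R]_n) (ls : 'cV[R]_m) : Prop :=
  A *m xs = b /\ g xs + A^T *m ls = 0.

Definition Lbeta m n (f : 'cV[R]_n -> R) (A : 'M[R]_(m, n)) (b : 'cV[R]_m)
  (beta : R) (x : 'cV[R]_n) (l : 'cV[R]_m) : R :=
  f x + dot l (A *m x - b) + beta / 2 * nsq (A *m x - b).

(* ||z||_M^2 for z = (x, l) *)
Definition Mnsq m n (gamma delta : R) (x : 'cV[R]_n) (l : 'cV[R]_m) : R :=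
  gamma^-1 * nsq x + delta^-1 * nsq l.

Definition param_seq (t : nat -> R) (rho : R) : Prop :=
  (forall k, (1 <= k)%N -> t k <= t k.+1) /\
  t 1%N = 1 /\
  (forall k, (2 < k)%N -> 1 < t k) /\
  (forall M : R, exists N : nat, forall k, (N <= k)%N -> M <= t k) /\
  (forall k, (1 <= k)%N -> t k.+1 ^+ 2 - t k ^+ 2 <= rho * t k.+1).

Definition alpha_k (t : nat -> R) (eta : R) k : R := (t k.+1 - eta) / eta.
Definition c_k (t : nat -> R) (eta : R) k : R := t k.+1 / eta.
Definition xbar_k n (t : nat -> R) (x : nat -> 'cV[R]_n) k : 'cV[R]_n :=
  x k + ((t k - 1) / t k.+1) *: (x k - x k.-1).
Definition lbar_k m (t : nat -> R) (l : nat -> 'cV[R]_m) k : 'cV[R]_m :=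
  l k + ((t k - 1) / t k.+1) *: (l k - l k.-1).
Definition p_k m (t : nat -> R) (eta : R) (l : nat -> 'cV[R]_m) k : 'cV[R]_m :=
  c_k t eta k *: lbar_k t l k - alpha_k t eta k *: l k.
Definition r_k m n (t : nat -> R) (eta : R) (A : 'M[R]_(m, n)) (b : 'cV[R]_m)
  (x : nat -> 'cV[R]_n) k : 'cV[R]_m :=
  alpha_k t eta k *: (A *m x k) + b.

(* common (smooth-part-free) terms of the subproblem objective *)
Definition sub_rest m n (A : 'M[R]_(m, n)) (b : 'cV[R]_m) (beta gamma delta eta : R)
  (t : nat -> R) (x : nat -> 'cV[R]_n) (l : nat -> 'cV[R]_m) k (y : 'cV[R]_n) : R :=
  beta / 2 * nsq (A *m y - b) + (2 * gamma)^-1 * nsq (y - xbar_k t x k)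
  + dot (p_k t eta l k) (A *m y - b)
  + delta / 2 * nsq (c_k t eta k *: (A *m y) - r_k t eta A b x k).

Definition PhiI m n (f : 'cV[R]_n -> R) (A : 'M[R]_(m, n)) (b : 'cV[R]_m)
  (beta gamma delta eta : R) t x l k (y : 'cV[R]_n) : R :=
  f y + sub_rest A b beta gamma delta eta t x l k y.

Definition PhiII m n (g : 'cV[R]_n -> 'cV[R]_n) (A : 'M[R]_(m, n)) (b : 'cV[R]_m)
  (beta gamma delta eta : R) t x l k (y : 'cV[R]_n) : R :=
  dot (g (xbar_k t x k)) y + sub_rest A b beta gamma delta eta t x l k y.

Definition lam_update m n (A : 'M[R]_(m, n)) (b : 'cV[R]_m) (delta eta : R)
  (t : nat -> R) (x : nat -> 'cV[R]_n) (l : nat -> 'cV[R]_m) k : 'cV[R]_m :=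
  lbar_k t l k + delta *: (c_k t eta k *: (A *m x k.+1) - r_k t eta A b x k).

Definition H_k m n f (A : 'M[R]_(m, n)) b beta (x : nat -> 'cV[R]_n)
  (xs : 'cV[R]_n) (ls : 'cV[R]_m) k : R :=
  Lbeta f A b beta (x k) ls - Lbeta f A b beta xs ls.

Definition B_k m n (gamma delta eta : R) (t : nat -> R) (x : nat -> 'cV[R]_n)
  (l : nat -> 'cV[R]_m) xs ls k : R :=
  let wx := eta *: (x k - xs) + (t k - 1) *: (x k - x k.-1) in
  let wl := eta *: (l k - ls) + (t k - 1) *: (l k - l k.-1) in
  1 / 2 * Mnsq gamma delta wx wl
  + eta * (1 - eta) / 2 * Mnsq gamma delta (x k - xs) (l k - ls).

Definition E_k m n f (A : 'M[R]_(m, n)) b (beta gamma delta eta : R) t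
  (x : nat -> 'cV[R]_n) (l : nat -> 'cV[R]_m) xs ls k : R :=
  t k ^+ 2 * H_k f A b beta x xs ls k + B_k gamma delta eta t x l xs ls k.

End Defs.

From mathcomp Require Import all_boot all_order all_algebra reals.
From mathcomp Require Import ring lra.
Import Order.TTheory GRing.Theory Num.Theory.
Set Implicit Arguments. Unset Strict Implicit. Unset Printing Implicit Defensive.
Local Open Scope ring_scope.

(* The x-update is an exact (Case I) or linearised (Case II) proximal step: if
   [G] is the gradient at [x_{k+1}] of the smooth part [sub_rest] of the
   subproblem, then [-G] is a subgradient of [f] at [x_{k+1}] up to an error
   [eps <= |x_{k+1} - xbar_k|^2 / (2 gamma)], which vanishes in Case I and comes
   from the descent lemma and [gamma <= 1/L] in Case II.  Evaluating this
   inequality at [x*] and at [x_k] with weights [eta] and [t_{k+1} - eta] bounds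
   [t_{k+1} H_{k+1} - (t_{k+1} - eta) H_k] by inner products which, through the
   multiplier update, are the cross terms of the expansion of [B_{k+1} - B_k].
   That expansion also contributes [- t_{k+1}^2 |z_{k+1} - zbar_k|_M^2 / 2],
   which absorbs [eps], and [t_{k+1}^2 - t_k^2 <= rho t_{k+1}] together with
   [H_k >= 0] produces the coefficient [(rho - eta) t_{k+1}]. *)

Section InnerProduct.
Variables (R : realType) (p : nat).
Implicit Types (u v w : 'cV[R]_p) (a : R).

Lemma dotC u v : dot u v = dot v u.
Proof. by apply: eq_bigr => i _; rewrite mulrC. Qed.

Lemma dotDl u v w : dot (u + v) w = dot u w + dot v w.
Proof. by rewrite /dot -big_split; apply: eq_bigr => i _; rewrite mxE mulrDl. Qed.

Lemma dotZl a u v : dot (a *: u) v = a * dot u v.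
Proof. by rewrite /dot mulr_sumr; apply: eq_bigr => i _; rewrite mxE mulrA. Qed.

Lemma dotNl u v : dot (- u) v = - dot u v.
Proof. by rewrite -scaleN1r dotZl mulN1r. Qed.

Lemma dotBl u v w : dot (u - v) w = dot u w - dot v w.
Proof. by rewrite dotDl dotNl. Qed.

Lemma dotDr u v w : dot u (v + w) = dot u v + dot u w.
Proof. by rewrite dotC dotDl !(dotC u). Qed.

Lemma dotZr a u v : dot u (a *: v) = a * dot u v.
Proof. by rewrite dotC dotZl dotC. Qed.

Lemma dotNr u v : dot u (- v) = - dot u v.
Proof. by rewrite dotC dotNl dotC. Qed.

Lemma dot0r u : dot u 0 = 0.
Proof. by rewrite -(scale0r 0) dotZr mul0r. Qed.

Lemma nsq_ge0 u : 0 <= nsq u.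
Proof. by rewrite sumr_ge0 // => i _; rewrite -expr2 sqr_ge0. Qed.

Lemma enorm_ge0 u : 0 <= enorm u.
Proof. exact: sqrtr_ge0. Qed.

Lemma sqr_enorm u : enorm u ^+ 2 = nsq u.
Proof. by rewrite sqr_sqrtr // nsq_ge0. Qed.

Lemma enormZ a u : 0 <= a -> enorm (a *: u) = a * enorm u.
Proof.
move=> a_ge0; rewrite /enorm /nsq dotZl dotZr mulrA sqrtrM ?mulr_ge0 //.
by rewrite -expr2 sqrtr_sqr ger0_norm.
Qed.

Lemma nsqDZ u v a : nsq (u + a *: v) = nsq u + 2 * a * dot u v + a ^+ 2 * nsq v.
Proof. by rewrite /nsq !(dotDl, dotDr, dotZl, dotZr) (dotC v u); ring. Qed.

Lemma nsqB u v : nsq (u - v) = nsq u - 2 * dot u v + nsq v.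
Proof. by rewrite /nsq !(dotDl, dotDr, dotNl, dotNr) (dotC v u); ring. Qed.

(* Young's inequality [2 <u, v> <= |u|^2 / c + c |v|^2]. *)
Lemma dot_le_of_nsq_le u v (c : R) :
  0 < c -> nsq u <= c ^+ 2 * nsq v -> dot u v <= c * nsq v.
Proof.
move=> c_gt0 huv.
have := nsq_ge0 (u - c *: v).
rewrite /nsq !(dotDl, dotDr, dotNl, dotNr, dotZl, dotZr) (dotC v u) -/(nsq u) -/(nsq v).
by move=> sq_ge0; rewrite -(ler_pM2l c_gt0); nra.
Qed.

End InnerProduct.

Lemma dot_trmx (R : realType) m n (A : 'M[R]_(m, n)) (u : 'cV[R]_m) (v : 'cV[R]_n) :
  dot (A^T *m u) v = dot u (A *m v).
Proof.
rewrite /dot; under eq_bigr => i _ do rewrite !mxE big_distrl /=.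
rewrite exchange_big /=; apply: eq_bigr => j _; rewrite !mxE big_distrr /=.
by apply: eq_bigr => i _; rewrite mxE; ring.
Qed.

Section RealFacts.
Variable R : realType.

Lemma ge0_of_small_perturbations (X C : R) :
  (forall s, 0 < s -> s <= 1 -> 0 <= X + s * C) -> 0 <= X.
Proof.
move=> H; rewrite leNgt; apply/negP => X_lt0.
have C_ge0 := normr_ge0 C.
have den_gt0 : 0 < - X + `|C| + 1 by lra.
set s := - X / (- X + `|C| + 1).
have s_gt0 : 0 < s by rewrite divr_gt0 //; lra.
have s_le1 : s <= 1 by rewrite ler_pdivrMr //; lra.
have s_def : s * (- X + `|C| + 1) = - X by rewrite mulfVK // gt_eqF.
have := H s s_gt0 s_le1.
have : s * C <= s * `|C| by rewrite ler_pM2l // ler_norm.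
have : s * (X - 1) < 0 by rewrite pmulr_rlt0 //; lra.
lra.
Qed.

Lemma le0_of_le_divn (a C : R) :
  0 <= C -> (forall N : nat, (0 < N)%N -> a <= C / N%:R) -> a <= 0.
Proof.
move=> C_ge0 H; rewrite leNgt; apply/negP => a_gt0.
set N := (Num.Def.archi_bound (C / a)).+1.
have N_gt0 : 0 < N%:R :> R by rewrite ltr0n.
have CaN : C / a < N%:R.
  apply: lt_le_trans (archi_boundP (divr_ge0 C_ge0 (ltW a_gt0))) _.
  by rewrite ler_nat.
move: CaN (H N isT); rewrite ltr_pdivrMr // ler_pdivlMr //; nra.
Qed.

Lemma nondecreasing_ge1 (t : nat -> R) :
  t 1%N = 1 -> (forall k, (1 <= k)%N -> t k <= t k.+1) ->
  forall k, (1 <= k)%N -> 1 <= t k.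
Proof.
move=> t1 t_mono; elim=> [//|[|k] IH] _; first by rewrite t1.
exact: le_trans (IH isT) (t_mono k.+1 isT).
Qed.

End RealFacts.

Section SmoothConvex.
Variables (R : realType) (n : nat) (f : 'cV[R]_n -> R) (g : 'cV[R]_n -> 'cV[R]_n).
Hypotheses (f_convex : convex_fun f) (f_grad : is_gradient f g).

Lemma convex_gradient_ineq x y : f x + dot (g x) (y - x) <= f y.
Proof.
set h := y - x.
suff : 0 <= f y - f x - dot (g x) h by lra.
apply: (@ge0_of_small_perturbations _ _ (enorm h)) => e e_gt0 _.
have [d d_gt0 Hd] := f_grad x e_gt0.
have h_ge0 := enorm_ge0 h.
have den_gt0 : 0 < d + enorm h + 1 by lra.
set s := d / (d + enorm h + 1).
have s_gt0 : 0 < s by rewrite divr_gt0.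
have s_le1 : s <= 1 by rewrite ler_pdivrMr //; lra.
have sh_small : enorm (s *: h) < d.
  by rewrite (enormZ _ (ltW s_gt0)) mulrAC ltr_pdivrMr //; nra.
have := Hd _ sh_small; rewrite (enormZ _ (ltW s_gt0)) dotZr => /ler_normlP [lower _].
have := f_convex x y (ltW s_gt0) s_le1.
have -> : (1 - s) *: x + s *: y = x + s *: h.
  by apply/matrixP => i j; rewrite !mxE; ring.
move=> upper.
have : 0 <= s * (f y - f x - dot (g x) h + e * enorm h) by lra.
by rewrite pmulr_rge0.
Qed.

Section LipschitzGradient.
Variable L : R.
Hypotheses (L_gt0 : 0 < L) (g_lipschitz : lipschitz_map g L).

Lemma lipschitz_gradient_increment x d (a a' : R) : a <= a' -> 0 < a' ->
  f (x + a' *: d) - f (x + a *: d) <= (a' - a) * (dot (g x) d + L * a' * nsq d).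
Proof.
move=> le_aa' a'_gt0.
have := convex_gradient_ineq (x + a' *: d) (x + a *: d).
have -> : x + a *: d - (x + a' *: d) = (a - a') *: d.
  by apply/matrixP => i j; rewrite !mxE; ring.
rewrite dotZr.
have -> : g (x + a' *: d) = g x + (g (x + a' *: d) - g x) by rewrite [RHS]addrC subrK.
rewrite dotDl => gi.
have gap : dot (g (x + a' *: d) - g x) d <= L * a' * nsq d.
  apply: dot_le_of_nsq_le; first exact: mulr_gt0.
  have := g_lipschitz (x + a' *: d) x.
  rewrite [x + _ - x]addrC addKr (enormZ _ (ltW a'_gt0)) -!sqr_enorm -exprMn => Lg.
  have bound_ge0 : 0 <= L * a' * enorm d by rewrite !mulr_ge0 ?enorm_ge0 // ltW.
  by rewrite ler_sqr ?nnegrE ?enorm_ge0 // -mulrA.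
have : 0 <= a' - a by rewrite subr_ge0.
move=> /ler_wpM2l /(_ _ _ gap); lra.
Qed.

(* Sum the increments along the grid [j / N] of [0, 1], then let [N] grow. *)
Lemma descent_lemma x d : f (x + d) <= f x + dot (g x) d + L / 2 * nsq d.
Proof.
suff : f (x + d) - f x - dot (g x) d - L / 2 * nsq d <= 0 by lra.
have C_ge0 : 0 <= L / 2 * nsq d by rewrite mulr_ge0 ?nsq_ge0 // divr_ge0 // ltW.
apply: (le0_of_le_divn C_ge0) => N N_gt0.
have N_gt0' : 0 < N%:R :> R by rewrite ltr0n.
set h := N%:R^-1; have h_gt0 : 0 < h by rewrite invr_gt0.
have partial j : f (x + (j%:R * h) *: d) - f x
    <= j%:R * h * dot (g x) d + L * nsq d * (j%:R * h * (j%:R * h + h)) / 2.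
  elim: j => [|j IH]; first by rewrite mul0r scale0r addr0 subrr; lra.
  have step := lipschitz_gradient_increment x d (a := j%:R * h) (a' := j.+1%:R * h).
  rewrite -natr1 mulrDl mul1r in step *.
  have a_ge0 : 0 <= j%:R * h by rewrite mulr_ge0 // ltW.
  have {}step := step (ler_wpDr (ltW h_gt0) (lexx _)) (ltr_wpDl a_ge0 h_gt0).
  set a := j%:R * h in IH step *; lra.
have := partial N; rewrite mulfV ?gt_eqF // scale1r; lra.
Qed.

End LipschitzGradient.
End SmoothConvex.

Lemma dot_convex (R : realType) n (c : 'cV[R]_n) : convex_fun (dot c).
Proof. by move=> x y s _ _; rewrite dotDr !dotZr lexx. Qed.

(* First-order optimality along the segment from [z] to [y]: as [s -> 0] the
   quadratic term [s ^+ 2 * Q] of [S] becomes negligible. *)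
Lemma argmin_convex_add_quadratic (R : realType) n (phi S Q : 'cV[R]_n -> R)
    (G z : 'cV[R]_n) :
  convex_fun phi ->
  (forall v s, S (z + s *: v) = S z + s * dot G v + s ^+ 2 * Q v) ->
  is_argmin (fun y => phi y + S y) z ->
  forall y, phi z - dot G (y - z) <= phi y.
Proof.
move=> phi_convex S_line z_min y.
suff : 0 <= phi y - phi z + dot G (y - z) by lra.
apply: (@ge0_of_small_perturbations _ _ (Q (y - z))) => s s_gt0 s_le1.
have := z_min (z + s *: (y - z)); rewrite /= S_line.
have -> : z + s *: (y - z) = (1 - s) *: z + s *: y.
  by apply/matrixP => i j; rewrite !mxE; ring.
have := phi_convex z y s (ltW s_gt0) s_le1.
move=> conv opt.
have : 0 <= s * (phi y - phi z + dot G (y - z) + s * Q (y - z)) by lra.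
by rewrite pmulr_rge0.
Qed.

Section Subproblem.
Variables (R : realType) (m n : nat) (A : 'M[R]_(m, n)) (b : 'cV[R]_m).
Variables (beta gamma delta eta : R) (t : nat -> R).
Variables (x : nat -> 'cV[R]_n) (l : nat -> 'cV[R]_m).

Definition sub_rest_grad k (y : 'cV[R]_n) : 'cV[R]_n :=
  beta *: (A^T *m (A *m y - b)) + gamma^-1 *: (y - xbar_k t x k)
  + A^T *m (p_k t eta l k
            + (delta * c_k t eta k) *: (c_k t eta k *: (A *m y) - r_k t eta A b x k)).

Definition sub_rest_curv k (v : 'cV[R]_n) : R :=
  beta / 2 * nsq (A *m v) + (2 * gamma)^-1 * nsq v
  + delta / 2 * c_k t eta k ^+ 2 * nsq (A *m v).

Lemma sub_rest_line k y v s :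
  sub_rest A b beta gamma delta eta t x l k (y + s *: v)
  = sub_rest A b beta gamma delta eta t x l k y + s * dot (sub_rest_grad k y) v
    + s ^+ 2 * sub_rest_curv k v.
Proof.
rewrite /sub_rest /sub_rest_grad /sub_rest_curv.
move: (xbar_k t x k) (p_k t eta l k) (r_k t eta A b x k) (c_k t eta k) => xb p r c.
rewrite !dotDl !dotZl !dot_trmx (dotDl p) dotZl mulmxDr -scalemxAr.
move: (A *m y) (A *m v) => Ay Av.
have -> : Ay + s *: Av - b = (Ay - b) + s *: Av.
  by apply/matrixP => i j; rewrite !mxE; ring.
have -> : y + s *: v - xb = (y - xb) + s *: v.
  by apply/matrixP => i j; rewrite !mxE; ring.
have -> : c *: (Ay + s *: Av) - r = (c *: Ay - r) + (s * c) *: Av.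
  by apply/matrixP => i j; rewrite !mxE; ring.
rewrite !nsqDZ dotDr dotZr invfM.
by move: gamma^-1 => gi; field.
Qed.

Lemma PhiI_argmin_subgradient f k y1 : convex_fun f ->
  is_argmin (PhiI f A b beta gamma delta eta t x l k) y1 ->
  forall y, f y1 - dot (sub_rest_grad k y1) (y - y1) <= f y.
Proof. by move=> f_convex; apply: argmin_convex_add_quadratic => // v s; apply: sub_rest_line. Qed.

Lemma PhiII_argmin_subgradient f g L k y1 :
  convex_fun f -> is_gradient f g -> 0 < L -> lipschitz_map g L ->
  is_argmin (PhiII g A b beta gamma delta eta t x l k) y1 ->
  forall y, f y1 - dot (sub_rest_grad k y1) (y - y1) - L / 2 * nsq (y1 - xbar_k t x k) <= f y.
Proof.
move=> f_convex f_grad L_gt0 g_lipschitz y1_min y.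
set xb := xbar_k t x k.
have := argmin_convex_add_quadratic (dot_convex (g xb)) (sub_rest_line k y1) y1_min y.
have := descent_lemma f_convex f_grad L_gt0 g_lipschitz xb (y1 - xb).
rewrite [xb + _]addrC subrK.
have := convex_gradient_ineq f_convex f_grad xb y.
rewrite !dotDr !dotNr; lra.
Qed.

Lemma sub_rest_grad_next k : eta != 0 -> l k.+1 = lam_update A b delta eta t x l k ->
  sub_rest_grad k (x k.+1)
  = beta *: (A^T *m (A *m x k.+1 - b)) + gamma^-1 *: (x k.+1 - xbar_k t x k)
    + A^T *m (eta^-1 *: (t k.+1 *: l k.+1 - (t k.+1 - eta) *: l k)).
Proof.
move=> eta_neq0 l_next; rewrite /sub_rest_grad; congr (_ + A^T *m _).
rewrite l_next /lam_update /p_k /c_k /alpha_k /r_k.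
move: (lbar_k t l k) (l k) (A *m x k) (A *m x k.+1) => lb l0 Ax0 Ax1.
by apply/matrixP => i j; rewrite !mxE; field.
Qed.

Lemma lam_update_residual k xs : eta != 0 -> A *m xs = b ->
  l k.+1 = lam_update A b delta eta t x l k ->
  l k.+1 - lbar_k t l k
  = (delta / eta) *: (A *m (eta *: (x k - xs) + t k.+1 *: (x k.+1 - x k))).
Proof.
move=> eta_neq0 Axs l_next.
rewrite l_next /lam_update /c_k /r_k /alpha_k mulmxDr -!scalemxAr !mulmxBr Axs.
move: (lbar_k t l k) (A *m x k) (A *m x k.+1) => lb Ax0 Ax1.
by apply/matrixP => i j; rewrite !mxE; field.
Qed.

End Subproblem.

Lemma Lbeta_feasible (R : realType) m n (f : 'cV[R]_n -> R) (A : 'M[R]_(m, n)) b beta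
    (xs : 'cV[R]_n) (ls : 'cV[R]_m) :
  A *m xs = b -> Lbeta f A b beta xs ls = f xs.
Proof. by move=> Axs; rewrite /Lbeta /nsq Axs subrr !dot0r mulr0 !addr0. Qed.

Lemma KKT_Lbeta_min (R : realType) m n (f : 'cV[R]_n -> R) g (A : 'M[R]_(m, n)) b beta
    (xs : 'cV[R]_n) (ls : 'cV[R]_m) :
  convex_fun f -> is_gradient f g -> KKT g A b xs ls -> 0 <= beta ->
  forall y, Lbeta f A b beta xs ls <= Lbeta f A b beta y ls.
Proof.
move=> f_convex f_grad [Axs g_xs] beta_ge0 y.
have := convex_gradient_ineq f_convex f_grad xs y.
have -> : g xs = - (A^T *m ls) by apply/eqP; rewrite -addr_eq0 g_xs.
rewrite Lbeta_feasible // /Lbeta dotNl dot_trmx mulmxBr Axs.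
have : 0 <= beta / 2 * nsq (A *m y - b) by rewrite mulr_ge0 ?nsq_ge0 ?divr_ge0.
lra.
Qed.

(* Combining the approximate subgradient inequality at [xs] and at [x0] with
   weights [eta] and [s - eta]; the [beta]-terms add up to a nonpositive square. *)
Lemma lagrangian_step (R : realType) m n (f : 'cV[R]_n -> R) (A : 'M[R]_(m, n)) b
    (beta eta s eps : R) (xs x0 x1 d : 'cV[R]_n) (ls lh : 'cV[R]_m) :
  0 <= eta -> eta <= s -> 0 <= beta -> A *m xs = b ->
  (forall y, f x1 - dot (beta *: (A^T *m (A *m x1 - b)) + d + A^T *m lh) (y - x1) - eps
             <= f y) ->
  s * (Lbeta f A b beta x1 ls - Lbeta f A b beta xs ls)
  - (s - eta) * (Lbeta f A b beta x0 ls - Lbeta f A b beta xs ls)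
  <= s * eps - dot d (eta *: (x0 - xs) + s *: (x1 - x0))
     - dot (lh - ls) (A *m (eta *: (x0 - xs) + s *: (x1 - x0))).
Proof.
move=> eta_ge0 eta_le_s beta_ge0 Axs x1_sub.
set w := eta *: (x0 - xs) + s *: (x1 - x0).
set G := _ + d + _ in x1_sub.
have comb : s * f x1 + dot G w - s * eps <= eta * f xs + (s - eta) * f x0.
  have -> : dot G w = - (eta * dot G (xs - x1) + (s - eta) * dot G (x0 - x1)).
    rewrite -!dotZr -dotDr -dotNr; congr dot.
    by rewrite /w; apply/matrixP => i j; rewrite !mxE; ring.
  have := ler_wpM2l eta_ge0 (x1_sub xs).
  have s_eta_ge0 : 0 <= s - eta by rewrite subr_ge0.
  have := ler_wpM2l s_eta_ge0 (x1_sub x0).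
  lra.
have Aw : A *m w = s *: (A *m x1 - b) - (s - eta) *: (A *m x0 - b).
  rewrite /w mulmxDr -!scalemxAr !mulmxBr Axs.
  by move: (A *m x0) (A *m x1) => Ax0 Ax1; apply/matrixP => i j; rewrite !mxE; ring.
have Gw : dot G w = beta * dot (A *m x1 - b) (A *m w) + dot d w + dot lh (A *m w).
  by rewrite /G dotDl dotDl dotZl !dot_trmx.
rewrite dotBl [Lbeta _ _ _ _ xs _]Lbeta_feasible // /Lbeta.
move: comb; rewrite Gw Aw.
move: (A *m x0 - b) (A *m x1 - b) => r0 r1 comb.
have sq_ge0 : 0 <= beta / 2 * ((s - eta) * nsq (r0 - r1) + eta * nsq r1).
  apply: mulr_ge0; first by rewrite divr_ge0.
  by apply: addr_ge0; apply: mulr_ge0; rewrite ?nsq_ge0 ?subr_ge0.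
rewrite nsqB in sq_ge0.
rewrite !(dotDr, dotNr, dotZr) in comb *.
rewrite -/(nsq r1) (dotC r1 r0) in comb.
lra.
Qed.

Lemma momentum_energy_identity (R : realType) p (zm z0 z1 zs : 'cV[R]_p) (s tau eta : R) :
  s != 0 ->
  1 / 2 * nsq (eta *: (z1 - zs) + (s - 1) *: (z1 - z0))
  - 1 / 2 * nsq (eta *: (z0 - zs) + (tau - 1) *: (z0 - zm))
  + eta * (1 - eta) / 2 * (nsq (z1 - zs) - nsq (z0 - zs))
  = s * dot (z1 - (z0 + ((tau - 1) / s) *: (z0 - zm))) (eta *: (z0 - zs) + s *: (z1 - z0))
    - s ^+ 2 / 2 * nsq (z1 - (z0 + ((tau - 1) / s) *: (z0 - zm)))
    - (1 - eta) * (s - 1 / 2) * nsq (z1 - z0).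
Proof.
move=> s_neq0; rewrite /nsq !(dotDl, dotDr, dotZl, dotZr, dotNl, dotNr).
rewrite (dotC z1 z0) (dotC z1 zs) (dotC z1 zm) (dotC z0 zs) (dotC z0 zm) (dotC zs zm).
by field.
Qed.

Lemma E_k_step (R : realType) m n (f : 'cV[R]_n -> R) (A : 'M[R]_(m, n)) b
    (t : nat -> R) (rho eta gamma delta beta eps : R)
    (x : nat -> 'cV[R]_n) (l : nat -> 'cV[R]_m) (xs : 'cV[R]_n) (ls : 'cV[R]_m) k :
  0 < eta -> eta <= t k.+1 -> 0 < gamma -> 0 < delta -> 0 <= beta ->
  t k.+1 ^+ 2 - t k ^+ 2 <= rho * t k.+1 ->
  A *m xs = b -> (forall y, Lbeta f A b beta xs ls <= Lbeta f A b beta y ls) ->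
  l k.+1 = lam_update A b delta eta t x l k ->
  eps <= (2 * gamma)^-1 * nsq (x k.+1 - xbar_k t x k) ->
  (forall y, f (x k.+1)
     - dot (sub_rest_grad A b beta gamma delta eta t x l k (x k.+1)) (y - x k.+1) - eps
     <= f y) ->
  E_k f A b beta gamma delta eta t x l xs ls k.+1
  - E_k f A b beta gamma delta eta t x l xs ls k
  <= (rho - eta) * t k.+1 * H_k f A b beta x xs ls k
     - (1 - eta) * (t k.+1 - 1 / 2) * Mnsq gamma delta (x k.+1 - x k) (l k.+1 - l k).
Proof.
move=> eta_gt0 eta_le_s gamma_gt0 delta_gt0 beta_ge0 t_step Axs xs_min l_next eps_le x1_sub.
have eta_neq0 : eta != 0 by rewrite gt_eqF.
have s_gt0 : 0 < t k.+1 := lt_le_trans eta_gt0 eta_le_s.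
have s_neq0 : t k.+1 != 0 by rewrite gt_eqF.
rewrite sub_rest_grad_next // in x1_sub.
have step := lagrangian_step (x k) ls (ltW eta_gt0) eta_le_s beta_ge0 Axs x1_sub.
have residual := lam_update_residual eta_neq0 Axs l_next.
have Ix := momentum_energy_identity (x k.-1) (x k) (x k.+1) xs (t k) eta s_neq0.
have Il := momentum_energy_identity (l k.-1) (l k) (l k.+1) ls (t k) eta s_neq0.
rewrite -/(xbar_k t x k) -/(lbar_k t l k) in Ix Il.
set s := t k.+1 in s_gt0 s_neq0 t_step eps_le step residual Ix Il *.
set w := eta *: (x k - xs) + s *: (x k.+1 - x k) in step residual Ix.
set wl := eta *: (l k - ls) + s *: (l k.+1 - l k) in Il.
(* The multiplier update turns the dual term of [lagrangian_step] into the
   cross term of [momentum_energy_identity] for the multipliers. *)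
have dual : dot (eta^-1 *: (s *: l k.+1 - (s - eta) *: l k) - ls) (A *m w)
            = delta^-1 * dot (l k.+1 - lbar_k t l k) wl.
  have -> : eta^-1 *: (s *: l k.+1 - (s - eta) *: l k) - ls = eta^-1 *: wl.
    by rewrite /wl; apply/matrixP => i j; rewrite !mxE; field.
  by rewrite residual !dotZl (dotC wl) -mulrA mulKf // gt_eqF.
rewrite dual dotZl in step.
have {}step := ler_wpM2l (ltW s_gt0) step.
have {}Ix := congr1 (fun z => gamma^-1 * z) Ix.
have {}Il := congr1 (fun z => delta^-1 * z) Il.
have H_ge0 : 0 <= Lbeta f A b beta (x k) ls - Lbeta f A b beta xs ls.
  by rewrite subr_ge0.
have t_gap : 0 <= rho * s - (s ^+ 2 - t k ^+ 2) by rewrite subr_ge0.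
have := mulr_ge0 t_gap H_ge0.
rewrite invfM in eps_le.
have := ler_wpM2l (sqr_ge0 s) eps_le.
have : 0 <= delta^-1 * (s ^+ 2 / 2 * nsq (l k.+1 - lbar_k t l k)).
  by rewrite !mulr_ge0 ?nsq_ge0 ?sqr_ge0 ?invr_ge0 ?ltW.
rewrite /E_k /H_k /B_k /Mnsq /= -/s.
lra.
Qed.

Theorem lemma3p2 (R : realType) (m n : nat)
  (f : 'cV[R]_n -> R) (g : 'cV[R]_n -> 'cV[R]_n)
  (A : 'M[R]_(m, n)) (b : 'cV[R]_m)
  (t : nat -> R) (rho eta gamma delta beta : R)
  (x : nat -> 'cV[R]_n) (l : nat -> 'cV[R]_m)
  (xs : 'cV[R]_n) (ls : 'cV[R]_m) :
  convex_fun f -> is_gradient f g -> continuous_map g ->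
  KKT g A b xs ls ->
  0 < rho -> rho <= 1 -> param_seq t rho ->
  rho <= eta -> eta <= 1 -> 0 < gamma -> 0 < delta -> 0 <= beta ->
  x 0%N = x 1%N -> l 0%N = l 1%N ->
  (forall k, (1 <= k)%N -> l k.+1 = lam_update A b delta eta t x l k) ->
  ((forall k, (1 <= k)%N ->
       is_argmin (PhiI f A b beta gamma delta eta t x l k) (x k.+1))
   \/
   (exists L : R, 0 < L /\ lipschitz_map g L /\ gamma <= L^-1 /\
     forall k, (1 <= k)%N ->
       is_argmin (PhiII g A b beta gamma delta eta t x l k) (x k.+1))) ->
  forall k, (1 <= k)%N ->
    E_k f A b beta gamma delta eta t x l xs ls k.+1
    - E_k f A b beta gamma delta eta t x l xs ls k
    <= (rho - eta) * t k.+1 * H_k f A b beta x xs ls k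
       - (1 - eta) * (t k.+1 - 1 / 2)
         * Mnsq gamma delta (x k.+1 - x k) (l k.+1 - l k).
Proof.
move=> f_convex f_grad _ kkt rho_gt0 _ [t_mono [t1 [_ [_ t_step]]]] rho_le_eta eta_le1
  gamma_gt0 delta_gt0 beta_ge0 _ _ l_next x_next k k_ge1.
have eta_gt0 : 0 < eta := lt_le_trans rho_gt0 rho_le_eta.
have eta_le_s : eta <= t k.+1 := le_trans eta_le1 (nondecreasing_ge1 t1 t_mono (ltn0Sn k)).
have xs_min := KKT_Lbeta_min f_convex f_grad kkt beta_ge0.
have [eps eps_le x_sub] : exists2 eps, eps <= (2 * gamma)^-1 * nsq (x k.+1 - xbar_k t x k) &
    forall y, f (x k.+1) - dot (sub_rest_grad A b beta gamma delta eta t x l k (x k.+1))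
                                (y - x k.+1) - eps <= f y.
  case: x_next => [x_min | [L [L_gt0 [g_lipschitz [gamma_le x_min]]]]].
  - exists 0; first by rewrite mulr_ge0 ?nsq_ge0 // invr_ge0 mulr_ge0 // ltW.
    by move=> y; rewrite subr0; exact: PhiI_argmin_subgradient f_convex (x_min k k_ge1) y.
  - exists (L / 2 * nsq (x k.+1 - xbar_k t x k)).
      have L_le : L <= gamma^-1.
        rewrite -(ler_pM2r gamma_gt0) mulVf ?gt_eqF //.
        by have := ler_wpM2l (ltW L_gt0) gamma_le; rewrite mulfV ?gt_eqF // mulrC.
      by apply: (ler_wpM2r (nsq_ge0 _)); rewrite invfM; lra.
    exact: PhiII_argmin_subgradient f_convex f_grad L_gt0 g_lipschitz (x_min k k_ge1).
have [Axs _] := kkt.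
exact: E_k_step eta_gt0 eta_le_s gamma_gt0 delta_gt0 beta_ge0 (t_step k k_ge1) Axs xs_min
  (l_next k k_ge1) eps_le x_sub.
Qed.
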